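(* Let $G=(V,E)$ be a finite graph with positive edge weights $(\theta_e)$, let $z>0$, let $\mathbf{y}(z)\in(0,\infty)^{\vec E}$ be the (unique) solution of $\mathbf{y}(z)=z\mathcal{R}_G(\mathbf{y}(z))$, and define for each edge $e$ with orientations $\vec e,-\vec e$ \[ x_e(z)=\frac{\theta_e y_{\vec e}(z)y_{-\vec e}(z)}{z+\theta_e y_{\vec e}(z)y_{-\vec e}(z)}. \] Then for every edge $e=(uv)\in E$, \[ \frac{x_e(z)(1-x_e(z))}{z}= \theta_e\Big(1-\sum_{e'\in \partial u}x_{e'}(z)\Big)\Big(1-\sum_{e'\in \partial v}x_{e'}(z)\Big). \]
   Context: $\vec E$ contains the two orientations $u\to v$, $v\to u$ of each edge $uv$. $\mathcal{R}_G(\mathbf{a})_{u\to v}=(1+\sum_{w\in\partial u\setminus v}\theta_{wu}a_{w\to u})^{-1}$, where $\partial u\setminus v$ is the set of neighbours of $u$ other than $v$ and empty sums are $0$; $z\mathcal{R}_G$ multiplies each component by $z$. $\partial u$ denotes the set of edges incident to $u$. *)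

From mathcomp Require Import all_boot all_order all_algebra.
Set Implicit Arguments. Unset Strict Implicit. Unset Printing Implicit Defensive.
Import Order.TTheory GRing.Theory Num.Theory.
Local Open Scope ring_scope.

(* Oriented edge u -> v is the pair (u, v) with adj u v.
   Edge weights: theta : T -> T -> R, symmetric, positive on edges.
   A vector a in R^{\vec E} is a function a : T -> T -> R, where a u v is the
   value on u -> v (values on non-edges are irrelevant). *)

Definition simple_graph (T : finType) (adj : rel T) : Prop :=
  symmetric adj /\ irreflexive adj.

Definition RG (R : realFieldType) (T : finType) (adj : rel T)
    (theta : T -> T -> R) (a : T -> T -> R) (u v : T) : R :=
  (1 + \sum_(w | adj w u && (w != v)) theta w u * a w u)^-1.

Definition is_fixed_point (R : realFieldType) (T : finType) (adj : rel T)
    (theta : T -> T -> R) (z : R) (y : T -> T -> R) : Prop :=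
  forall u v, adj u v -> 0 < y u v /\ y u v = z * RG adj theta y u v.

Definition xe (R : realFieldType) (T : finType)
    (theta : T -> T -> R) (z : R) (y : T -> T -> R) (u v : T) : R :=
  theta u v * y u v * y v u / (z + theta u v * y u v * y v u).

From mathcomp Require Import all_boot all_order all_algebra.
From mathcomp Require Import ring.
Import Order.TTheory GRing.Theory Num.Theory.
Set Implicit Arguments. Unset Strict Implicit. Unset Printing Implicit Defensive.
Local Open Scope ring_scope.

(* Writing S_u for the weighted inflow sum_{w ~ u} theta_wu y_{w->u}, the
   fixed-point equation says z = y_{u->v} (1 + S_u - theta_uv y_{v->u}), i.e.
   z + theta_uv y_{u->v} y_{v->u} = y_{u->v} (1 + S_u) = y_{v->u} (1 + S_v).
   Hence x_e = theta_uv y_{v->u} / (1 + S_u), the x's around u sum to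
   S_u / (1 + S_u), and with P = theta_uv y_{u->v} y_{v->u} both sides equal
   P / (z + P)^2 = theta_uv / ((1 + S_u) (1 + S_v)). *)

Lemma frac_mul_one_sub_frac (F : fieldType) (z P : F) :
  z != 0 -> z + P != 0 ->
  P / (z + P) * (1 - P / (z + P)) / z = P / (z + P) ^+ 2.
Proof. by move=> z0 zP0; field; apply/andP. Qed.

Section FixedPoint.

Variables (R : realFieldType) (T : finType) (adj : rel T).
Variables (theta : T -> T -> R) (z : R) (y : T -> T -> R).
Hypothesis adj_sym : symmetric adj.
Hypothesis theta_sym : forall u v, theta u v = theta v u.
Hypothesis theta_gt0 : forall u v, adj u v -> 0 < theta u v.
Hypothesis fixed_y : is_fixed_point adj theta z y.

Definition inflow (u : T) : R := \sum_(w | adj w u) theta w u * y w u.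

Lemma y_gt0 u v : adj u v -> 0 < y u v.
Proof. by case/fixed_y. Qed.

Lemma y_neq0 u v : adj u v -> y u v != 0.
Proof. by move/y_gt0/lt0r_neq0. Qed.

Lemma inflow_term_ge0 u w : adj w u -> 0 <= theta w u * y w u.
Proof. by move=> hwu; rewrite ltW // mulr_gt0 ?theta_gt0 ?y_gt0. Qed.

Lemma one_add_inflow_gt0 u : 0 < 1 + inflow u.
Proof. by rewrite ltr_pwDl // sumr_ge0 // => w; apply: inflow_term_ge0. Qed.

Lemma one_add_inflow_neq0 u : 1 + inflow u != 0.
Proof. exact/lt0r_neq0/one_add_inflow_gt0. Qed.

Lemma fixed_point_inflow u v : adj u v ->
  z = y u v * (1 + inflow u - theta v u * y v u).
Proof.
move=> huv; have [_ yE] := fixed_y huv.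
have hvu : adj v u by rewrite adj_sym.
have -> : 1 + inflow u - theta v u * y v u =
          1 + \sum_(w | adj w u && (w != v)) theta w u * y w u.
  by rewrite /inflow (bigD1 v) //=; ring.
have RG0 : 1 + \sum_(w | adj w u && (w != v)) theta w u * y w u != 0.
  rewrite lt0r_neq0 // ltr_pwDl // sumr_ge0 // => w /andP[hwu _].
  exact: inflow_term_ge0.
by rewrite {1}yE /RG -mulrA mulVf ?mulr1.
Qed.

Lemma xe_denomE u v : adj u v ->
  z + theta u v * y u v * y v u = y u v * (1 + inflow u).
Proof. by move=> huv; rewrite (fixed_point_inflow huv) theta_sym; ring. Qed.

Lemma xeE u v : adj u v -> xe theta z y u v = theta v u * y v u / (1 + inflow u).
Proof.
move=> huv; rewrite /xe xe_denomE // theta_sym.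
by field; rewrite y_neq0 ?one_add_inflow_neq0.
Qed.

Lemma one_sub_sum_xe u :
  1 - \sum_(w | adj u w) xe theta z y u w = (1 + inflow u)^-1.
Proof.
have S0 := one_add_inflow_neq0 u.
rewrite (eq_bigr _ (fun w => xeE (u := u) (v := w))) -mulr_suml.
rewrite (eq_bigl (fun w => adj w u)) => [|w]; last by rewrite adj_sym.
by rewrite -/(inflow u); field.
Qed.

Lemma xe_denom_sym u v : adj u v ->
  z + theta u v * y u v * y v u = y v u * (1 + inflow v).
Proof. by move=> huv; rewrite -xe_denomE 1?adj_sym // theta_sym mulrAC. Qed.

Lemma xe_mul_one_sub_xe u v : 0 < z -> adj u v ->
  xe theta z y u v * (1 - xe theta z y u v) / z =
  theta u v / ((1 + inflow u) * (1 + inflow v)).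
Proof.
move=> z_gt0 huv; have hvu : adj v u by rewrite adj_sym.
have denom0 : z + theta u v * y u v * y v u != 0.
  by rewrite xe_denomE // mulf_neq0 ?y_neq0 ?one_add_inflow_neq0.
rewrite /xe (frac_mul_one_sub_frac (lt0r_neq0 z_gt0) denom0) expr2.
rewrite {1}xe_denomE // xe_denom_sym //.
by field; rewrite !one_add_inflow_neq0 !y_neq0.
Qed.

End FixedPoint.

Theorem lemma4p16 (R : realFieldType) (T : finType) (adj : rel T)
    (theta : T -> T -> R) (z : R) (y : T -> T -> R) :
  simple_graph adj ->
  (forall u v, theta u v = theta v u) ->
  (forall u v, adj u v -> 0 < theta u v) ->
  0 < z ->
  is_fixed_point adj theta z y ->
  forall u v, adj u v ->
    xe theta z y u v * (1 - xe theta z y u v) / z =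
    theta u v * (1 - \sum_(w | adj u w) xe theta z y u w)
              * (1 - \sum_(w | adj v w) xe theta z y v w).
Proof.
move=> [adj_sym _] theta_sym theta_gt0 z_gt0 fixed_y u v huv.
rewrite (xe_mul_one_sub_xe adj_sym theta_sym theta_gt0 fixed_y z_gt0 huv).
by rewrite !(one_sub_sum_xe adj_sym theta_sym theta_gt0 fixed_y) invfM mulrA.
Qed.
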